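(* Let $m\geq 2$ and $n\geq 2$ be integers, let $T_m$ be a tree of order $m$ and $H_n$ a graph of order $n$. Then $rvc(T_m\diamond H_n)=rvc(T_m)$.
   Context: All graphs are finite, simple, connected and undirected. A rainbow vertex $k$-coloring of $G$ is a map $c:V(G)\to\{1,\dots,k\}$ such that every two vertices are joined by a path whose internal vertices all receive distinct colors; $rvc(G)$ is the least $k$ for which $G$ has one. For graphs $G_m$ (order $m$) and $H_n$ (order $n$) on disjoint vertex sets, the edge corona $G_m\diamond H_n$ is obtained from one copy of $G_m$ and $|E(G_m)|$ vertex-disjoint copies of $H_n$, one per edge of $G_m$, by joining both end vertices of the $j$-th edge of $G_m$ to every vertex of the $j$-th copy of $H_n$. *)

From mathcomp Require Import all_boot.
Set Implicit Arguments. Unset Strict Implicit. Unset Printing Implicit Defensive.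

Definition simple_graph (V : finType) (e : rel V) : Prop :=
  symmetric e /\ irreflexive e.

Definition connected_graph (V : finType) (e : rel V) : Prop :=
  forall x y : V, connect e x y.

Definition has_cycle (V : finType) (e : rel V) : Prop :=
  exists (x : V) (p : seq V),
    [/\ path e x p, uniq (x :: p), 2 <= size p & e (last x p) x].

Definition is_tree (V : finType) (e : rel V) : Prop :=
  connected_graph e /\ ~ has_cycle e.

Definition edge_of (V : finType) (e : rel V) : pred {set V} :=
  fun A => [exists x, exists y, e x y && (A == [set x; y])].

Definition edgeT (V : finType) (e : rel V) : finType := {A : {set V} | edge_of e A}.

(* Edge corona G ◇ H: vertices of G, plus one copy of H for each edge of G. *)
Definition corona_vertex (V W : finType) (e : rel V) : finType :=
  (V + (edgeT e * W))%type.

Definition corona_rel (V W : finType) (e : rel V) (eH : rel W) :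
  rel (corona_vertex W e) :=
  fun u v =>
    match u, v with
    | inl x, inl y => e x y
    | inl x, inr (f, _) => x \in val f
    | inr (f, _), inl x => x \in val f
    | inr (f, h), inr (f', h') => (f == f') && eH h h'
    end.

(* Its internal vertices are
   behead (belast x p) (all vertices except x and y). *)
Definition rainbow_path (V : finType) (e : rel V) (k : nat) (c : V -> 'I_k)
    (x y : V) (p : seq V) : bool :=
  [&& path e x p, last x p == y, uniq (x :: p)
    & uniq (map c (behead (belast x p)))].

Definition rainbow_vertex_coloring (V : finType) (e : rel V) (k : nat)
    (c : V -> 'I_k) : Prop :=
  forall x y : V, x != y -> exists p : seq V, rainbow_path e c x y p.

Definition has_rvc (V : finType) (e : rel V) (k : nat) : Prop :=
  exists c : V -> 'I_k, rainbow_vertex_coloring e c.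

Definition is_rvc (V : finType) (e : rel V) (k : nat) : Prop :=
  has_rvc e k /\ forall j, has_rvc e j -> k <= j.
Arguments corona_rel {V W} e eH u v.

From mathcomp Require Import all_boot.
Set Implicit Arguments. Unset Strict Implicit. Unset Printing Implicit Defensive.

(* Any two inner (non-leaf) vertices u, w of a tree T lie strictly inside a
   common path: extend the u-w path beyond u and beyond w, which acyclicity
   allows.  As paths of a tree are unique, every rainbow colouring of T is
   injective on its inner vertices.  Conversely, a colouring injective on the
   inner vertices is rainbow for T ◇ H: join two vertices of the corona through
   a shortest path of T between the tree vertices they are attached to; all its
   interior vertices are inner.  Finally a rainbow colouring of T ◇ H restricts
   to one of T, since removing the vertices of the copies of H from a corona
   path between tree vertices leaves a path of T.  So T and T ◇ H admit rainbow
   colourings with exactly the same numbers of colours. *)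

Lemma uniq_map_inj_in (T U : eqType) (f : T -> U) (s : seq T) :
  uniq (map f s) -> {in s &, injective f}.
Proof.
elim: s => //= x s IHs /andP[fx_s uniq_fs] y z.
rewrite !inE => /predU1P[-> | ys] /predU1P[-> | zs] // fyz.
- by move: fx_s; rewrite fyz (map_f f zs).
- by move: fx_s; rewrite -fyz (map_f f ys).
- exact: IHs.
Qed.

Lemma rev_lastI (T : Type) (x : T) p : last x p :: rev (belast x p) = rev (x :: p).
Proof. by rewrite [x :: p]lastI rev_rcons. Qed.

Lemma last_rev_belast (T : Type) (x : T) p : last (last x p) (rev (belast x p)) = x.
Proof. by rewrite -(last_cons x) rev_lastI rev_cons last_rcons. Qed.

Lemma uniq_interior (T : eqType) (x : T) p :
  uniq (x :: p) -> uniq (behead (belast x p)).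
Proof. by rewrite lastI rcons_uniq => /andP[_]; case: (belast x p) => //= ? ? /andP[]. Qed.

Section Paths.
Variables (V : finType) (e : rel V).

Lemma suffix_from_last_in (A : {set V}) s p : path e s p -> uniq (s :: p) ->
    has (mem A) (s :: p) ->
  exists s' p', [/\ s' \in A, path e s' p', uniq (s' :: p'),
    last s' p' = last s p & {in p', forall v, v \notin A}].
Proof.
elim: p s => [|y p IHp] s /=; first by rewrite orbF => _ _ sA; exists s, [::].
move=> /andP[esy yp] /andP[s_yp uniq_yp].
have [A_yp _ | NA_yp] := boolP (has (mem A) (y :: p)); first exact: IHp.
case/orP=> [sA | A_yp]; last by rewrite /= A_yp in NA_yp.
exists s, (y :: p); rewrite /= esy yp s_yp uniq_yp.
by split=> // v /(hasPn NA_yp).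
Qed.

Lemma prefix_to_first_in (B : {set V}) s p : path e s p -> uniq (s :: p) ->
    last s p \in B ->
  exists p', [/\ path e s p', uniq (s :: p'), last s p' \in B,
    {in belast s p', forall v, v \notin B} & {subset p' <= p}].
Proof.
elim: p s => [|y p IHp] s /=; first by exists [::].
move=> /andP[esy yp] /andP[s_yp uniq_yp] lastB.
have [sB | sNB] := boolP (s \in B); first by exists [::].
have [p' [yp' uniq_yp' lastB' notB sub_p']] := IHp y yp uniq_yp lastB.
have sub_yp : {subset y :: p' <= y :: p}.
  by move=> v; rewrite !inE => /predU1P[-> | /sub_p' ->]; rewrite ?eqxx ?orbT.
exists (y :: p'); split=> //.
- by rewrite /= esy.
- by apply/andP; split; [apply: contra s_yp => /sub_yp | exact: uniq_yp'].
- by move=> v; rewrite /= inE => /predU1P[-> | /notB].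
Qed.

Lemma simple_path_suffix x p s1 z s2 : x :: p = s1 ++ z :: s2 ->
    path e x p -> uniq (x :: p) ->
  [/\ path e z s2, uniq (z :: s2) & last z s2 = last x p].
Proof.
move=> xp_eq xp; rewrite xp_eq cat_uniq => /and3P[_ _ uniq_zs2].
case: s1 xp_eq => [|y s1] /= [x_eq p_eq]; subst; first by [].
by move: xp; rewrite cat_path last_cat /= => /and3P[_ _ ->].
Qed.

Hypothesis e_sym : symmetric e.

Definition inner_vertices : {set V} :=
  [set x | [exists y, exists z, [&& y != z, e x y & e x z]]].

Lemma inner_vertexP x :
  reflect (exists y z, [/\ y != z, e x y & e x z]) (x \in inner_vertices).
Proof.
rewrite inE; apply: (iffP existsP) => [[y /existsP[z /and3P[]]] | [y [z []]]].
  by exists y, z.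
by exists y; apply/existsP; exists z; apply/and3P.
Qed.

Lemma interior_inner x p : path e x p -> uniq (x :: p) ->
  {subset behead (belast x p) <= inner_vertices}.
Proof.
elim: p x => [|y p IHp] x //= /andP[exy yp] /andP[x_yp uniq_yp] z.
case: p IHp yp uniq_yp x_yp => [|y' p] // IHp yp uniq_yp x_yp.
rewrite inE => /predU1P[-> | ]; last exact: IHp y yp uniq_yp z.
have /andP[eyy' _] := yp.
apply/inner_vertexP; exists x, y'; split=> //; last by rewrite e_sym.
by apply: contraNneq x_yp => ->; rewrite !inE eqxx orbT.
Qed.

Lemma path_inner_tail x p z : path e x p -> uniq (x :: p) ->
  e (last x p) z -> z \notin x :: p -> {subset p <= inner_vertices}.
Proof.
move=> xp uniq_xp ez z_xp v v_p.
apply: (@interior_inner x (rcons p z)); last by rewrite belast_rcons.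
- by rewrite rcons_path xp ez.
- by rewrite -rcons_cons rcons_uniq z_xp.
Qed.

Lemma path_inner_head z x p : path e x p -> uniq (x :: p) ->
  e z x -> z \notin x :: p -> {subset belast x p <= inner_vertices}.
Proof. by move=> xp uniq_xp ez z_xp; apply: (@interior_inner z (x :: p)); rewrite /= ?ez ?z_xp. Qed.

Lemma path_inner_ends y x p z : path e x p -> uniq (x :: p) -> p != [::] ->
    e y x -> y \notin x :: p -> e (last x p) z -> z \notin x :: p ->
  {subset x :: p <= inner_vertices}.
Proof.
move=> xp uniq_xp p_nil eyx y_out ez z_out v; rewrite inE => /predU1P[-> | ].
  have x_belast : x \in belast x p by case: (p) p_nil => // ? ? _; apply: mem_head.
  exact: path_inner_head xp uniq_xp eyx y_out x x_belast.
exact: path_inner_tail xp uniq_xp ez z_out v.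
Qed.

Lemma rev_simple_path x p : path e x p -> uniq (x :: p) ->
  path e (last x p) (rev (belast x p)) /\ uniq (last x p :: rev (belast x p)).
Proof.
move=> xp uniq_xp; rewrite rev_lastI rev_uniq rev_path; split=> //.
by rewrite (eq_path (e' := e)) // => ? ?; apply: e_sym.
Qed.

Hypothesis e_conn : connected_graph e.

Lemma simple_path_exists x y :
  exists p, [/\ path e x p, uniq (x :: p) & last x p = y].
Proof.
have /connectP[q xq ->] := e_conn x y.
by case: (shortenP xq) => p xp uniq_xp _; exists p.
Qed.

Lemma separating_path (A B : {set V}) a b : a \in A -> b \in B ->
  exists s p, [/\ path e s p, uniq (s :: p), s \in A & last s p \in B] /\
    {in A, forall v, v != s -> v \notin s :: p} /\
    {in B, forall v, v != last s p -> v \notin s :: p}.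
Proof.
move=> aA bB; have [q [aq uniq_aq last_aq]] := simple_path_exists a b.
have A_aq : has (mem A) (a :: q) by rewrite /= aA.
have [s [p' [sA sp' uniq_sp' last_sp' notA]]] := suffix_from_last_in aq uniq_aq A_aq.
have B_last : last s p' \in B by rewrite last_sp' last_aq.
have [p [sp uniq_sp lastB notB sub_p]] := prefix_to_first_in sp' uniq_sp' B_last.
exists s, p; split=> //; split=> v vAB.
  rewrite inE => /negPf -> /=; apply: contraTN vAB => /sub_p; exact: notA.
move=> v_last; rewrite lastI mem_rcons inE (negPf v_last) /=.
by apply: contraTN vAB; exact: notB.
Qed.

End Paths.

Section Tree.
Variables (V : finType) (e : rel V).
Hypothesis e_sym : symmetric e.
Hypothesis e_conn : connected_graph e.
Hypothesis e_irr : irreflexive e.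
Hypothesis e_acyc : ~ has_cycle e.

Local Notation inner_vertices := (inner_vertices e).

Lemma neighbour_on_path_pred x p z : path e x p -> uniq (x :: p) ->
  z \in x :: p -> e (last x p) z -> z = last x (belast x p).
Proof.
move=> xp uniq_xp z_xp ez.
have [s1 [s2 xp_eq]] : exists s1 s2, x :: p = s1 ++ z :: s2.
  by case/splitPr: z_xp => s1 s2; exists s1, s2.
have [zs2 uniq_zs2 last_zs2] := simple_path_suffix xp_eq xp uniq_xp.
case: s2 => [|w [|w' s2]] in xp_eq zs2 uniq_zs2 last_zs2.
- by rewrite -last_zs2 /= e_irr in ez.
- have /rcons_inj[-> _] : rcons (belast x p) (last x p) = rcons (rcons s1 z) w.
    by rewrite -lastI xp_eq -!cats1 -catA.
  by rewrite last_rcons.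
- by case: e_acyc; exists z, [:: w, w' & s2]; rewrite last_zs2.
Qed.

Lemma extend_simple_path x p : path e x p -> uniq (x :: p) ->
  last x p \in inner_vertices -> exists2 y, e (last x p) y & y \notin x :: p.
Proof.
move=> xp uniq_xp /inner_vertexP[y [z [yz ey ez]]].
have [y_out | /negbNE y_in] := boolP (y \notin x :: p); first by exists y.
exists z => //; apply: contra yz => z_in; apply/eqP.
by rewrite (neighbour_on_path_pred xp uniq_xp y_in ey) (neighbour_on_path_pred xp uniq_xp z_in ez).
Qed.

Lemma tree_path_unique x p q : path e x p -> path e x q ->
  uniq (x :: p) -> uniq (x :: q) -> last x p = last x q -> p = q.
Proof.
elim: p x q => [|y p IHp] x [|z q] //=.
- by move=> _ _ _ /andP[x_zq _] x_last; rewrite x_last mem_last in x_zq.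
- by move=> _ _ /andP[x_yp _] _ x_last; rewrite -x_last mem_last in x_yp.
move=> /andP[exy yp] /andP[exz zq] /andP[x_yp uniq_yp] /andP[x_zq uniq_zq] last_eq.
have [yz_eq | yz] := eqVneq y z; first by subst z; congr (_ :: _); exact: IHp yp zq uniq_yp uniq_zq last_eq.
have [rzq _] := rev_simple_path e_sym zq uniq_zq.
have y_walk : path e y (p ++ rev (belast z q)) by rewrite cat_path yp last_eq.
have last_walk : last y (p ++ rev (belast z q)) = z.
  by rewrite last_cat last_eq last_rev_belast.
case: (shortenP y_walk) last_walk => s ys uniq_ys sub_s last_s.
have x_ys : x \notin y :: s.
  apply/negP; rewrite inE => /predU1P[x_y | /sub_s].
    by move: x_yp; rewrite x_y mem_head.
  rewrite mem_cat mem_rev => /orP[x_p | /mem_belast x_zq'].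
    by move: x_yp; rewrite inE x_p orbT.
  by rewrite x_zq' in x_zq.
case: s => [|y' s] in ys uniq_ys sub_s last_s x_ys *; first by move: yz; rewrite -last_s /= eqxx.
case: e_acyc; exists x, [:: y, y' & s]; split.
- by rewrite /= exy.
- by rewrite cons_uniq x_ys.
- by [].
- by move: last_s => /= ->; rewrite e_sym.
Qed.

Lemma inner_on_common_path u w :
    u \in inner_vertices -> w \in inner_vertices -> u != w ->
  exists a p, [/\ path e a p, uniq (a :: p),
    u \in behead (belast a p) & w \in behead (belast a p)].
Proof.
move=> u_inner w_inner uw; have [q [uq uniq_uq last_uq]] := simple_path_exists e_conn u w.
have inner_last_q : last u q \in inner_vertices by rewrite last_uq.
have [b eb b_out] := extend_simple_path uq uniq_uq inner_last_q.
have [bq uniq_bq] : path e u (rcons q b) /\ uniq (u :: rcons q b).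
  by rewrite rcons_path uq eb -rcons_cons rcons_uniq b_out.
have := rev_simple_path e_sym bq uniq_bq; rewrite last_rcons belast_rcons => -[rq uniq_rq].
have last_rq : last b (rev (u :: q)) = u by rewrite rev_cons last_rcons.
have inner_last_rq : last b (rev (u :: q)) \in inner_vertices by rewrite last_rq.
have [a ea a_out] := extend_simple_path rq uniq_rq inner_last_rq.
rewrite last_rq in ea a_out.
exists b, (rcons (rev (u :: q)) a); split.
- by rewrite rcons_path rq last_rq ea.
- by rewrite -rcons_cons rcons_uniq a_out.
- by rewrite belast_rcons /= mem_rev mem_head.
- by rewrite belast_rcons /= mem_rev -last_uq mem_last.
Qed.

Lemma rainbow_inner_inj k (c : V -> 'I_k) :
  rainbow_vertex_coloring e c -> {in inner_vertices &, injective c}.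
Proof.
move=> c_rainbow u w u_inner w_inner cuw; apply/eqP; apply: contraT => uw.
have [a [p [ap uniq_ap u_int w_int]]] := inner_on_common_path u_inner w_inner uw.
have a_last : a != last a p.
  case: p => [|y p] // in ap uniq_ap u_int w_int *.
  by apply: contraTneq uniq_ap => ->; rewrite /= mem_last.
have [q /and4P[aq /eqP last_aq uniq_aq rainbow]] := c_rainbow a (last a p) a_last.
rewrite (tree_path_unique aq ap uniq_aq uniq_ap last_aq) in rainbow.
by rewrite (uniq_map_inj_in rainbow u_int w_int cuw) eqxx in uw.
Qed.

End Tree.

Section Corona.
Variables (V W : finType) (e : rel V) (eH : rel W).
Hypothesis e_sym : symmetric e.
Hypothesis e_irr : irreflexive e.

Local Notation vertex := (corona_vertex W e).
Local Notation R := (corona_rel e eH).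

Lemma edge_adj (f : edgeT e) x y : x \in val f -> y \in val f -> x != y -> e x y.
Proof.
case: f => /= _ /existsP[x0 /existsP[y0 /andP[e0 /eqP ->]]].
by rewrite !inE => /orP[]/eqP-> /orP[]/eqP->; rewrite ?eqxx // e_sym.
Qed.

Lemma edge_neighbour (f : edgeT e) x : x \in val f -> exists2 y, y \in val f & e x y.
Proof.
case: f => /= _ /existsP[x0 /existsP[y0 /andP[e0 /eqP ->]]].
rewrite !inE => /orP[]/eqP->; first by exists y0; rewrite // !inE eqxx orbT.
by exists x0; rewrite 1?e_sym // !inE eqxx.
Qed.

Definition base_vertex (v : vertex) : option V := if v is inl x then Some x else None.

Lemma base_vertexK : ocancel base_vertex inl. Proof. by case. Qed.

(* In [base_path], [a] is the last tree vertex visited before [v]: [v] itself,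
   or an end of the edge whose copy of H contains [v]. *)
Definition anchored (a : V) (v : vertex) : bool :=
  if v is inr (f, _) then a \in val f else v == inl a.

Lemma base_path a v p : anchored a v -> path R v p -> uniq (v :: p) ->
  inl a \notin p -> path e a (pmap base_vertex p).
Proof.
elim: p v a => [|w p IHp] v a //= a_v /andP[vw wp] /andP[_ uniq_wp].
rewrite inE negb_or => /andP[aw a_p].
case: w => [y | [g h]] in vw wp uniq_wp aw *; rewrite /=.
- have -> : path e y (pmap base_vertex p).
    by apply: (IHp (inl y)); rewrite //= ?eqxx //; case/andP: uniq_wp.
  rewrite andbT.
  case: v a_v vw => [x /eqP[<-] // | [f h] /= af yf].
  by apply: edge_adj af yf _; apply: contraNneq aw => ->.
- apply: (IHp _ a) wp uniq_wp a_p.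
  by case: v a_v vw => [x /eqP[->] | [f h'] /= af /andP[/eqP <-]].
Qed.

Lemma corona_restrict_rainbow k (c : vertex -> 'I_k) :
  rainbow_vertex_coloring R c -> rainbow_vertex_coloring e (fun x => c (inl x)).
Proof.
move=> c_rainbow a b ab.
have [p /and4P[ap /eqP last_ap uniq_ap rainbow]] := c_rainbow (inl a) (inl b) ab.
case/lastP: p => [|p z] in ap last_ap uniq_ap rainbow *.
  by rewrite (inl_inj last_ap) eqxx in ab.
rewrite last_rcons in last_ap; subst z; rewrite belast_rcons in rainbow.
have pmap_rcons : pmap base_vertex (rcons p (inl b)) = rcons (pmap base_vertex p) b.
  by rewrite -!cats1 pmap_cat.
exists (rcons (pmap base_vertex p) b); apply/and4P; split.
- rewrite -pmap_rcons; apply: (base_path _ ap uniq_ap); first exact: eqxx.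
  by case/andP: uniq_ap.
- by rewrite last_rcons.
- by rewrite -pmap_rcons -[a :: _]/(pmap base_vertex (inl a :: _)) (pmap_uniq base_vertexK).
- rewrite belast_rcons /= (map_comp c inl) (pmap_filter base_vertexK).
  by apply: subseq_uniq rainbow; rewrite map_subseq ?filter_subseq.
Qed.

Definition attachment (v : vertex) : {set V} :=
  match v with inl x => [set x] | inr (f, _) => val f end.

Lemma attachment_nonempty v : exists x, x \in attachment v.
Proof.
case: v => [x | [[A /= /existsP[x0 /existsP[y0 /andP[_ /eqP A_eq]]]] _]].
  by exists x; rewrite inE.
by exists x0; rewrite /= A_eq !inE eqxx.
Qed.

Lemma edge_exit (f : edgeT e) s (P : seq V) : s \in val f ->
  {in val f, forall v, v != s -> v \notin P} -> exists2 s', e s s' & s' \notin P.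
Proof.
move=> sf mate; have [s' s'f ss'] := edge_neighbour sf.
by exists s' => //; apply: mate s'f _; apply: contraTneq ss' => ->; rewrite e_irr.
Qed.

(* The colour d of the vertices of the copies of H is irrelevant: they are never
   interior to the paths built below. *)
Definition corona_coloring k (d : 'I_k) (c : V -> 'I_k) (v : vertex) : 'I_k :=
  if v is inl x then c x else d.

Lemma corona_coloring_uniq k (d : 'I_k) (c : V -> 'I_k) K :
    {in inner_vertices e &, injective c} -> uniq K -> {subset K <= inner_vertices e} ->
  uniq (map (corona_coloring d c) (map inl K)).
Proof.
move=> c_inj uniq_K K_inner; rewrite -map_comp map_inj_in_uniq // => x y /K_inner ? /K_inner ?.
exact: c_inj.
Qed.

Lemma path_inl x p : path R (inl x) (map inl p) = path e x p.
Proof. by elim: p x => //= y p IHp x; rewrite IHp. Qed.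

Lemma inr_notin_inl z p : (inr z : vertex) \notin map inl p.
Proof. by apply/mapP => -[]. Qed.

Hypothesis e_conn : connected_graph e.

Lemma corona_extend_rainbow k (d : 'I_k) (c : V -> 'I_k) :
  {in inner_vertices e &, injective c} -> rainbow_vertex_coloring R (corona_coloring d c).
Proof.
move=> c_inj u v uv; have colors_uniq := corona_coloring_uniq d c_inj.
have [[a aA] [b bB]] := (attachment_nonempty u, attachment_nonempty v).
have [s [Q [[sQ uniq_sQ sA tB] [mateA mateB]]]] := separating_path e_conn aA bB.
have uniq_lift : uniq (inl s :: map inl Q : seq vertex).
  by rewrite -[inl s :: _]/(map inl (s :: Q)) (map_inj_uniq inl_inj).
case: u uv aA sA mateA => [x | [f h]] uv _ sA mateA;
  case: v uv bB tB mateB => [y | [g h']] uv _ tB mateB.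
- move: sA tB; rewrite !inE => /eqP s_x /eqP tB; subst x.
  exists (map inl Q); apply/and4P; split.
  + by rewrite path_inl.
  + by rewrite (last_map inl) tB.
  + exact: uniq_lift.
  + rewrite (belast_map inl) behead_map.
    exact: colors_uniq (uniq_interior uniq_sQ) (interior_inner e_sym sQ uniq_sQ).
- move: sA; rewrite inE => /eqP s_x; subst x.
  have [t' et' t'_out] := edge_exit tB mateB.
  exists (rcons (map inl Q) (inr (g, h'))); apply/and4P; split.
  + by rewrite rcons_path path_inl sQ (last_map inl).
  + by rewrite last_rcons.
  + by rewrite -rcons_cons rcons_uniq inr_notin_inl.
  + rewrite belast_rcons /=; apply: colors_uniq (path_inner_tail e_sym sQ uniq_sQ et' t'_out).
    by case/andP: uniq_sQ.
- move: tB; rewrite inE => /eqP tB.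
  have [s' es' s'_out] := edge_exit sA mateA.
  exists (inl s :: map inl Q); apply/and4P; split.
  + by rewrite /= sA path_inl.
  + by rewrite /= (last_map inl) tB.
  + by rewrite cons_uniq inE inr_notin_inl.
  + rewrite /= (belast_map inl); apply: colors_uniq.
      by move: uniq_sQ; rewrite lastI rcons_uniq => /andP[].
    by apply: (path_inner_head e_sym sQ uniq_sQ _ s'_out); rewrite e_sym.
- have [s' es' s'_out] := edge_exit sA mateA.
  have [t' et' t'_out] := edge_exit tB mateB.
  exists (inl s :: rcons (map inl Q) (inr (g, h'))); apply/and4P; split.
  + by rewrite /= sA rcons_path path_inl sQ (last_map inl).
  + by rewrite /= last_rcons.
  + rewrite cons_uniq -rcons_cons rcons_uniq inr_notin_inl uniq_lift andbT.
    by rewrite !inE mem_rcons !inE !negb_or uv inr_notin_inl.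
  + rewrite /= belast_rcons -[inl s :: _]/(map inl (s :: Q)).
    case: Q => [|q Q] in sQ uniq_sQ uniq_lift et' t'_out s'_out tB mateA mateB *; first by [].
    apply: (colors_uniq _ uniq_sQ).
    by apply: (path_inner_ends e_sym sQ uniq_sQ _ _ s'_out et' t'_out); rewrite // e_sym.
Qed.

End Corona.

Theorem theorem4 (m n : nat) (V W : finType) (eT : rel V) (eH : rel W) :
  2 <= m -> 2 <= n ->
  #|V| = m -> #|W| = n ->
  simple_graph eT -> is_tree eT ->
  simple_graph eH -> connected_graph eH ->
  forall k : nat, is_rvc eT k <-> is_rvc (corona_rel eT eH) k.
Proof.
move=> m_ge2 _ card_V _ [e_sym e_irr] [e_conn e_acyc] _ _ k.
have /card_gt0P[x0 _] : 0 < #|V| by rewrite card_V (leq_trans _ m_ge2).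
have has_rvcE j : has_rvc eT j <-> has_rvc (corona_rel eT eH) j.
  split=> -[c c_rainbow].
    exists (corona_coloring (c x0) c); apply: corona_extend_rainbow => //.
    exact: rainbow_inner_inj c_rainbow.
  by exists (fun x => c (inl x)); apply: corona_restrict_rainbow c_rainbow.
by split=> -[/has_rvcE k_rvc k_min]; split=> // j /has_rvcE; apply: k_min.
Qed.
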